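(* Let $k'>k$ be natural numbers and let $\mathcal D$ be a class of $k$-ary upwards-closed (not necessarily first-order) dependency notions. Then the $k'$-ary totality atom $\mathrm{All}_{k'}$ is not definable in $\mathbf{FO}(=\!(\cdot),\mathcal D,\sqcup)$.
   Context: Team semantics (lax version). For a structure $\mathfrak M$ with domain $M$, a team $X$ is a (possibly empty) set of assignments $s:V\to M$, $V$ a finite set of variables; for a tuple $\vec v$ of variables in $V$, $X(\vec v)=\{s(\vec v):s\in X\}$. Satisfaction for formulas in negation normal form: first-order literal $\alpha$: every $s\in X$ satisfies $\alpha$ (Tarski); $\psi\vee\theta$: $X=Y\cup Z$ with $\mathfrak M\models_Y\psi$, $\mathfrak M\models_Z\theta$; $\psi\wedge\theta$: both; $\exists v\psi$: some $F:X\to\mathcal P(M)\setminus\{\emptyset\}$ with $\mathfrak M\models_{X[F/v]}\psi$, $X[F/v]=\{s[m/v]:s\in X,m\in F(s)\}$; $\forall v\psi$: $\mathfrak M\models_{X[M/v]}\psi$, $X[M/v]=\{s[m/v]:s\in X,m\in M\}$. A $k$-ary dependency notion $\mathbf D$ is an isomorphism-closed class of structures $(M,R)$ with $R$ a $k$-ary relation; the atom $\mathbf D\vec v$ (for a $k$-tuple $\vec v$ of variables) satisfies $\mathfrak M\models_X\mathbf D\vec v$ iff $(M,X(\vec v))\in\mathbf D$. $\mathbf D$ is upwards-closed if $(M,R)\in\mathbf D$ and $R\subseteq S$ imply $(M,S)\in\mathbf D$. The constancy atoms $=\!(\vec v)$ (all arities): $\mathfrak M\models_X=\!(\vec v)$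 iff $s(\vec v)=s'(\vec v)$ for all $s,s'\in X$. The $k'$-ary totality atom: $\mathfrak M\models_X\mathrm{All}_{k'}(\vec v)$ iff $X(\vec v)=M^{k'}$. Classical disjunction: $\mathfrak M\models_X\phi\sqcup\psi$ iff $\mathfrak M\models_X\phi$ or $\mathfrak M\models_X\psi$. A $k'$-ary dependency $\mathbf E$ is definable in a logic $L$ if there is a formula $\theta(\vec v)$ of $L$ over the empty vocabulary, with $\vec v$ a tuple of $k'$ distinct variables, such that $\mathfrak M\models_X\mathbf E\vec v$ iff $\mathfrak M\models_X\theta(\vec v)$ for all structures $\mathfrak M$ and all teams $X$ whose domain contains $\vec v$. *)

From mathcomp Require Import all_boot.

Set Implicit Arguments.
Unset Strict Implicit.
Unset Printing Implicit Defensive.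

(** Variables are natural numbers. An assignment with finite domain V is a
    partial map [nat -> option M] defined exactly on V. A team is a set
    (predicate) of assignments. *)
Definition assignment (M : Type) := nat -> option M.
Definition team (M : Type) := assignment M -> Prop.

Definition team_dom (M : Type) (X : team M) (V : seq nat) : Prop :=
  forall s, X s -> forall x, (s x <> None <-> x \in V).

Definition upd (M : Type) (s : assignment M) (v : nat) (m : M) : assignment M :=
  fun x => if x == v then Some m else s x.

Definition team_rel (M : Type) (k : nat) (X : team M) (vs : 'I_k -> nat)
  : ('I_k -> M) -> Prop :=
  fun t => exists s, X s /\ forall i, s (vs i) = Some (t i).

(** A k-ary "dependency notion candidate": for each domain M, a class of
    k-ary relations on M (i.e. a class of structures (M,R)). *)
Definition DepNotion (k : nat) := forall M : Type, (('I_k -> M) -> Prop) -> Prop.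

Definition iso_closed (k : nat) (D : DepNotion k) : Prop :=
  forall (M N : Type) (f : M -> N) (g : N -> M),
    cancel f g -> cancel g f ->
    forall R : ('I_k -> M) -> Prop,
      D M R <-> D N (fun t => R (fun i => g (t i))).

Definition dependency_notion (k : nat) (D : DepNotion k) : Prop := iso_closed D.

Definition upwards_closed (k : nat) (D : DepNotion k) : Prop :=
  forall (M : Type) (R S : ('I_k -> M) -> Prop),
    D M R -> (forall t, R t -> S t) -> D M S.

Definition AllDep (k' : nat) : DepNotion k' := fun M R => forall t, R t.

(** * Syntax of FO(=(.), D, ⊔) in negation normal form, empty vocabulary.
    Dependency atoms carry a k-ary dependency notion; membership in the
    class D is imposed by [in_logic]. *)
Inductive form (k : nat) : Type :=
| FEq    : nat -> nat -> form k
| FNeq   : nat -> nat -> form k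
| FConst : seq nat -> form k
| FDep   : DepNotion k -> ('I_k -> nat) -> form k
| FAnd   : form k -> form k -> form k
| FOr    : form k -> form k -> form k
| FCOr   : form k -> form k -> form k
| FEx    : nat -> form k -> form k
| FAll   : nat -> form k -> form k.

Fixpoint sat (k : nat) (M : Type) (X : team M) (phi : form k) {struct phi} : Prop :=
  match phi with
  | FEq x y => forall s, X s -> exists a, s x = Some a /\ s y = Some a
  | FNeq x y => forall s, X s ->
      exists a b, s x = Some a /\ s y = Some b /\ a <> b
  | FConst vs => forall s s', X s -> X s' -> forall x, x \in vs -> s x = s' x
  | FDep D vs => D M (team_rel X vs)
  | FAnd p q => sat X p /\ sat X q
  | FOr p q => exists Y Z : team M,
      (forall s, X s <-> (Y s \/ Z s)) /\ sat Y p /\ sat Z q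
  | FCOr p q => sat X p \/ sat X q
  | FEx v p => exists F : assignment M -> M -> Prop,
      (forall s, X s -> exists m, F s m) /\
      sat (fun s' => exists s m, X s /\ F s m /\ forall x, s' x = upd s v m x) p
  | FAll v p =>
      sat (fun s' => exists s m, X s /\ forall x, s' x = upd s v m x) p
  end.

Fixpoint fv (k : nat) (phi : form k) : seq nat :=
  match phi with
  | FEq x y | FNeq x y => [:: x; y]
  | FConst vs => vs
  | FDep _ vs => [seq vs i | i <- enum 'I_k]
  | FAnd p q | FOr p q | FCOr p q => fv p ++ fv q
  | FEx v p | FAll v p => [seq x <- fv p | x != v]
  end.

Fixpoint in_logic (k : nat) (Dcls : DepNotion k -> Prop) (phi : form k) : Prop :=
  match phi with
  | FEq _ _ | FNeq _ _ | FConst _ => True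
  | FDep D _ => Dcls D
  | FAnd p q | FOr p q | FCOr p q => in_logic Dcls p /\ in_logic Dcls q
  | FEx _ p | FAll _ p => in_logic Dcls p
  end.

Definition definable (k k' : nat) (Dcls : DepNotion k -> Prop) (E : DepNotion k') : Prop :=
  exists (vs : 'I_k' -> nat) (theta : form k),
    injective vs /\ in_logic Dcls theta /\
    (forall x, x \in fv theta -> exists i, vs i = x) /\
    forall (M : Type) (X : team M) (V : seq nat),
      inhabited M -> team_dom X V -> (forall i, vs i \in V) ->
      (E M (team_rel X vs) <-> sat X theta).

From mathcomp Require Import all_boot.
From Stdlib Require Import Classical.
From Stdlib Require List.

Set Implicit Arguments.
Unset Strict Implicit.
Unset Printing Implicit Defensive.

(** Every formula of FO(=(.), D, ⊔) satisfied by a team X has a small core: a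
    subteam Y with at most c * |M|^k assignments, c the number of dependency
    atoms, such that every team between Y and X still satisfies the formula.
    Literals and constancy atoms are downward closed, and an upwards-closed
    k-ary atom needs only one witness per k-tuple of M.  If theta defined
    All_{k'}, then over a domain of size m = c + 1 the full team satisfies
    theta, so its core does too and must realise all m^{k'} tuples, although
    it has at most c * m^k < m^{k'} assignments. *)

Lemma inP (T : eqType) (x : T) (s : seq T) : reflect (List.In x s) (x \in s).
Proof.
elim: s => [|y s IHs] /=; first by right.
by rewrite in_cons; apply: (iffP orP) => [[/eqP ->|/IHs]|[->|/IHs]]; auto.
Qed.

Lemma seq_choice (A B : Type) (P : A -> B -> Prop) (l : seq A) :
  exists l' : seq B, size l' <= size l /\
    (forall b, List.In b l' -> exists a, P a b) /\
    forall a, List.In a l -> (exists b, P a b) -> exists b, List.In b l' /\ P a b.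
Proof.
elim: l => [|a l [l' [size_l' [l'_P l'_covers]]]].
  by exists [::]; split=> //; split=> // b [].
case: (classic (exists b, P a b)) => [[b Pab]|no_b].
- exists (b :: l'); split; first by rewrite ltnS.
  split=> [b' /= [<-|/l'_P] //|a' /= [<- _|/l'_covers a'_l' /a'_l' [b' [? ?]]]].
  + by exists a.
  + by exists b; split; first left.
  + by exists b'; split; first right.
- exists l'; split; first exact: leqW.
  by split=> // a' /= [<- /no_b|/l'_covers].
Qed.

Fixpoint num_dep_atoms (k : nat) (phi : form k) : nat :=
  match phi with
  | FDep _ _ => 1
  | FAnd p q | FOr p q | FCOr p q => num_dep_atoms p + num_dep_atoms q
  | FEx _ p | FAll _ p => num_dep_atoms p
  | _ => 0
  end.

Definition core_of (k : nat) (M : Type) (X : team M) (phi : form k)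
    (Y : seq (assignment M)) : Prop :=
  (forall s, List.In s Y -> X s) /\
  forall Z : team M,
    (forall s, List.In s Y -> Z s) -> (forall s, Z s -> X s) -> sat Z phi.

Definition extend_team (M : Type) (X : team M)
    (R : assignment M -> M -> assignment M -> Prop) : team M :=
  fun s' => exists s m, X s /\ R s m s'.

Section Cores.

Variables (k : nat) (M : Type).
Implicit Types (X : team M) (p q : form k) (Y : seq (assignment M)).

Lemma core_nil X p :
  (forall Z : team M, (forall s, Z s -> X s) -> sat Z p) -> core_of X p [::].
Proof. by move=> sat_sub; split=> // Z _; apply: sat_sub. Qed.

Lemma core_and X p q Y1 Y2 :
  core_of X p Y1 -> core_of X q Y2 -> core_of X (FAnd p q) (Y1 ++ Y2).
Proof.
move=> [Y1_X core1] [Y2_X core2]; split.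
  by move=> s /List.in_app_iff [/Y1_X|/Y2_X].
move=> Z Y_Z Z_X; split.
- by apply: core1 => // s s_Y1; apply/Y_Z/List.in_app_iff; left.
- by apply: core2 => // s s_Y2; apply/Y_Z/List.in_app_iff; right.
Qed.

Lemma core_or X A B p q Y1 Y2 :
  (forall s, X s <-> A s \/ B s) ->
  core_of A p Y1 -> core_of B q Y2 -> core_of X (FOr p q) (Y1 ++ Y2).
Proof.
move=> X_AB [Y1_A core1] [Y2_B core2]; split.
  by move=> s /List.in_app_iff [/Y1_A|/Y2_B] ?; apply/X_AB; [left|right].
move=> Z Y_Z Z_X.
exists (fun s => Z s /\ A s), (fun s => Z s /\ B s); split.
  move=> s; split=> [Zs|[[]|[]] //].
  by case: ((X_AB s).1 (Z_X s Zs)); [left|right].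
split.
- apply: core1 => [s s_Y1|s []//]; split; last exact: Y1_A.
  by apply/Y_Z/List.in_app_iff; left.
- apply: core2 => [s s_Y2|s []//]; split; last exact: Y2_B.
  by apply/Y_Z/List.in_app_iff; right.
Qed.

Lemma core_corl X p q Y : core_of X p Y -> core_of X (FCOr p q) Y.
Proof. by move=> [Y_X core]; split=> // Z Y_Z Z_X; left; apply: core. Qed.

Lemma core_corr X p q Y : core_of X q Y -> core_of X (FCOr p q) Y.
Proof. by move=> [Y_X core]; split=> // Z Y_Z Z_X; right; apply: core. Qed.

(* A core of the extended team is pulled back by choosing one preimage per
   assignment; teams between the pulled-back core and X extend to teams
   between the original core and the extension of X. *)
Lemma core_extend X R p Y' :
  core_of (extend_team X R) p Y' ->
  exists Y, size Y <= size Y' /\ (forall s, List.In s Y -> X s) /\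
    forall Z : team M, (forall s, List.In s Y -> Z s) -> (forall s, Z s -> X s) ->
      sat (extend_team Z R) p.
Proof.
move=> [Y'_ext core'].
have [Y [size_Y [Y_pre Y'_pre]]] :=
  seq_choice (fun s' s => X s /\ exists m, R s m s') Y'.
exists Y; split=> //; split; first by move=> s /Y_pre [s' []].
move=> Z Y_Z Z_X; apply: core' => [s' s'_Y'|s' [s [m [Zs Rs']]]].
- have [|s [s_Y [_ [m Rs']]]] := Y'_pre s' s'_Y'.
    by have [s [m [Xs Rs']]] := Y'_ext s' s'_Y'; exists s; split=> //; exists m.
  by exists s, m; split=> //; apply: Y_Z.
- by exists s, m; split=> //; apply: Z_X.
Qed.

Lemma core_ex X v F p Y' :
  (forall s, X s -> exists m, F s m) ->
  core_of (extend_team X (fun s m s' => F s m /\ forall x, s' x = upd s v m x)) p Y' ->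
  exists Y, size Y <= size Y' /\ core_of X (FEx v p) Y.
Proof.
move=> F_tot /core_extend [Y [size_Y [Y_X core]]].
exists Y; split=> //; split=> // Z Y_Z Z_X.
by exists F; split; [move=> s /Z_X /F_tot | apply: core].
Qed.

Lemma core_all X v p Y' :
  core_of (extend_team X (fun s m s' => forall x, s' x = upd s v m x)) p Y' ->
  exists Y, size Y <= size Y' /\ core_of X (FAll v p) Y.
Proof. by move=> /core_extend [Y [size_Y [Y_X core]]]; exists Y. Qed.

End Cores.

Lemma core_dep (k : nat) (M : finType) (D : DepNotion k) (vs : 'I_k -> nat)
    (X : team M) :
  upwards_closed D -> D M (team_rel X vs) ->
  exists Y, size Y <= #|M| ^ k /\ core_of X (FDep D vs) Y.
Proof.
move=> up_D D_X.
pose witness (f : {ffun 'I_k -> M}) s := X s /\ forall i, s (vs i) = Some (f i).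
have [Y [size_Y [Y_wit wit_Y]]] := seq_choice witness (enum {ffun 'I_k -> M}).
exists Y; split.
  by rewrite (leq_trans size_Y) // -cardE card_ffun card_ord.
split; first by move=> s /Y_wit [f []].
move=> Z Y_Z _; apply: up_D D_X _ => t [s [Xs s_t]].
have [|s' [s'_Y [_ s'_t]]] := wit_Y (finfun t) (elimT (inP _ _) (mem_enum _ _)).
  by exists s; split=> // i; rewrite s_t ffunE.
by exists s'; split; [apply: Y_Z | move=> i; rewrite s'_t ffunE].
Qed.

Lemma sat_small_core (k : nat) (Dcls : DepNotion k -> Prop) (M : finType) :
  (forall D, Dcls D -> upwards_closed D) ->
  forall phi : form k, in_logic Dcls phi -> forall X : team M, sat X phi ->
  exists Y, size Y <= num_dep_atoms phi * #|M| ^ k /\ core_of X phi Y.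
Proof.
move=> up; elim=> [x y|x y|ws|D vs|p IHp q IHq|p IHp q IHq|p IHp q IHq|v p IHp|v p IHp]
  /= phi_in X.
- by move=> sat_X; exists [::]; split=> //; apply: core_nil => Z Z_X s /Z_X /sat_X.
- by move=> sat_X; exists [::]; split=> //; apply: core_nil => Z Z_X s /Z_X /sat_X.
- move=> sat_X; exists [::]; split=> //; apply: core_nil => Z Z_X s s' /Z_X Xs /Z_X.
  exact: sat_X.
- by rewrite mul1n; apply: core_dep (up _ phi_in).
- case: phi_in => p_in q_in [/(IHp p_in) [Y1 [le1 core1]] /(IHq q_in) [Y2 [le2 core2]]].
  exists (Y1 ++ Y2); split; first by rewrite size_cat mulnDl leq_add.
  exact: core_and.
- case: phi_in => p_in q_in [A [B [X_AB [/(IHp p_in) [Y1 [le1 core1]]]]]].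
  move=> /(IHq q_in) [Y2 [le2 core2]].
  exists (Y1 ++ Y2); split; first by rewrite size_cat mulnDl leq_add.
  exact: core_or X_AB core1 core2.
- case: phi_in => p_in q_in [/(IHp p_in)|/(IHq q_in)] [Y [le core]]; exists Y.
  + by split; [rewrite (leq_trans le) // leq_mul2r leq_addr orbT | apply: core_corl].
  + by split; [rewrite (leq_trans le) // leq_mul2r leq_addl orbT | apply: core_corr].
- case=> F [F_tot /(IHp phi_in) [Y' [le' core']]].
  have [Y [le core]] := core_ex F_tot core'.
  by exists Y; split=> //; apply: leq_trans le le'.
- move=> /(IHp phi_in) [Y' [le' core']].
  have [Y [le core]] := core_all core'.
  by exists Y; split=> //; apply: leq_trans le le'.
Qed.

Lemma total_rel_size (k : nat) (M : finType) (x0 : M) (vs : 'I_k -> nat)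
    (Y : seq (assignment M)) :
  AllDep (team_rel (fun s => List.In s Y) vs) -> #|M| ^ k <= size Y.
Proof.
move=> total.
pose read s : {ffun 'I_k -> M} := [ffun i => odflt x0 (s (vs i))].
rewrite -{1}(card_ord k) -card_ffun cardE -(size_map read).
apply: uniq_leq_size; first exact: enum_uniq.
move=> f _; have [s [s_Y s_f]] := total f.
have -> : f = read s by apply/ffunP => i; rewrite ffunE s_f.
exact/inP/List.in_map.
Qed.

Lemma mul_exp_lt (c m k k' : nat) : c < m -> k < k' -> c * m ^ k < m ^ k'.
Proof.
move=> lt_cm lt_kk'; have m_gt0 : 0 < m by apply: leq_ltn_trans lt_cm.
apply: (@leq_trans (m ^ k.+1)); last by rewrite leq_pexp2l.
by rewrite expnSr mulnC ltn_pmul2l ?expn_gt0 ?m_gt0.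
Qed.

Definition tuple_assignment (M : Type) (k : nat) (vs : 'I_k -> nat)
    (t : 'I_k -> M) : assignment M :=
  fun x => if [pick i | vs i == x] is Some i then Some (t i) else None.

Lemma tuple_assignmentE (M : Type) (k : nat) (vs : 'I_k -> nat) (t : 'I_k -> M) i :
  injective vs -> tuple_assignment vs t (vs i) = Some (t i).
Proof.
move=> inj_vs; rewrite /tuple_assignment; case: pickP => [j /eqP /inj_vs -> //|].
by move=> /(_ i); rewrite eqxx.
Qed.

Lemma tuple_assignment_dom (M : Type) (k : nat) (vs : 'I_k -> nat) (t : 'I_k -> M) x :
  tuple_assignment vs t x <> None <-> x \in map vs (enum 'I_k).
Proof.
rewrite /tuple_assignment; case: pickP => [i /eqP <-|no_i].
  by split=> // _; rewrite map_f ?mem_enum.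
by split=> // /mapP [i _ x_vs]; have := no_i i; rewrite x_vs eqxx.
Qed.

Theorem mainTheorem3 (k k' : nat) (Dcls : DepNotion k -> Prop) :
  k < k' ->
  (forall D, Dcls D -> dependency_notion D /\ upwards_closed D) ->
  ~ definable Dcls (@AllDep k').
Proof.
move=> lt_kk' Dcls_up [vs [theta [inj_vs [theta_in [_ def_theta]]]]].
pose m := (num_dep_atoms theta).+1; pose V := map vs (enum 'I_k').
pose X : team 'I_m := fun s => forall x, s x <> None <-> x \in V.
have inh : inhabited 'I_m by constructor; exact: ord0.
have V_vs i : vs i \in V by rewrite map_f ?mem_enum.
have sat_X : sat X theta.
  apply/(def_theta _ X V) => // t; exists (tuple_assignment vs t).
  by split=> [x|i]; [apply: tuple_assignment_dom | apply: tuple_assignmentE].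
have [Y [size_Y [Y_X core_Y]]] :=
  sat_small_core (fun D D_in => (Dcls_up D D_in).2) theta_in sat_X.
have Y_dom : team_dom (fun s => List.In s Y) V by move=> s /Y_X.
have total_Y : AllDep (team_rel (fun s => List.In s Y) vs).
  by apply/(def_theta _ _ V inh Y_dom V_vs); apply: core_Y.
have := leq_trans (total_rel_size ord0 total_Y) size_Y.
by rewrite card_ord leqNgt mul_exp_lt.
Qed.
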